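(* Let $(\pi_k)_k$ be a sequence of paths in a finite directed multigraph $\Gamma$. If there is an edge $\zeta$ of $\Gamma$ such that the sequence $(|\pi_k|_\zeta)_k$ is unbounded, then there is a cycle $\gamma$ in $\Gamma$ such that the sequence $(|\pi_k|_{c(\gamma)})_k$ is unbounded.
   Context: For a path $\gamma$ in $\Gamma$, its support $c(\gamma)$ is the subgraph of $\Gamma$ induced by the edges traversed by $\gamma$. For a path $\pi$ and an edge $\zeta$, $|\pi|_\zeta$ is the number of times $\pi$ traverses $\zeta$; for a subgraph $\Gamma'$, $|\pi|_{\Gamma'}$ is the minimum of $|\pi|_\zeta$ over all edges $\zeta$ of $\Gamma'$. *)

From mathcomp Require Import all_boot.
Set Implicit Arguments. Unset Strict Implicit. Unset Printing Implicit Defensive.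

Record multigraph := Multigraph {
  vert : finType;
  edge : finType;
  src : edge -> vert;
  tgt : edge -> vert }.

Fixpoint is_path (G : multigraph) (s : seq (edge G)) : bool :=
  match s with
  | [::] => true
  | e :: s' => match s' with
               | [::] => true
               | f :: _ => (tgt e == src f) && is_path s'
               end
  end.

Definition is_cycle (G : multigraph) (s : seq (edge G)) : bool :=
  match s with
  | [::] => false
  | e :: s' => is_path s && (tgt (last e s') == src e)
  end.

Definition occ (G : multigraph) (pi : seq (edge G)) (z : edge G) : nat :=
  count_mem z pi.

Definition edge_support (G : multigraph) (gamma : seq (edge G)) : {set edge G} :=
  [set z | z \in gamma].

(* The neutral value [size pi] is an upper bound
   for every |pi|_zeta, so for nonempty S this is exactly the minimum. *)
Definition occ_sub (G : multigraph) (pi : seq (edge G)) (S : {set edge G}) : nat :=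
  \big[minn/size pi]_(z in S) occ pi z.

Definition unbounded (u : nat -> nat) : Prop := ~ (exists B, forall k, u k <= B).

From mathcomp Require Import all_boot zify.
From Stdlib Require Import Classical.

Set Implicit Arguments.
Unset Strict Implicit.
Unset Printing Implicit Defensive.

(** Cutting a simple cycle out of a path leaves a path, so by iterating, the
   edges of a path split into simple cycles plus a duplicate-free remainder:
   every edge is traversed at most [1 + N] times, where [N] is the number of
   cycles cut out.  A cut-out cycle of support [S] traverses each edge of [S]
   once, so at most [|pi|_S] of them have support [S].  If [|pi_k|_{c(gamma)}]
   were bounded for every cycle [gamma], then, as there are finitely many
   supports, [N] and hence every [|pi_k|_zeta] would be bounded. *)

Section CycleDecomposition.

Variable G : multigraph.
Implicit Types (p a b c d : seq (edge G)) (S : {set edge G}).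

Definition linked : rel (edge G) := fun e f => tgt e == src f.

Lemma is_pathE p : is_path p = sorted linked p.
Proof.
elim: p => [|e p IHp] //; case: p IHp => [|f p] // IHp.
by rewrite -[is_path _]/((tgt e == src f) && is_path (f :: p)) IHp.
Qed.

Lemma is_cycleE e b :
  is_cycle (e :: b) = sorted linked (e :: b) && linked (last e b) e.
Proof. by rewrite /is_cycle is_pathE. Qed.

Lemma cycle_sorted c : is_cycle c -> sorted linked c.
Proof. by case: c => // e b; rewrite is_cycleE => /andP[]. Qed.

Lemma not_uniq_split p : ~~ uniq p -> exists a e b d, p = a ++ e :: b ++ e :: d.
Proof.
elim: p => [|x p IHp] //=; rewrite negb_and negbK => /orP[/splitPr[b d] | ].
  by exists [::], x, b, d.
by move=> /IHp[a [e [b [d ->]]]]; exists (x :: a), e, b, d.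
Qed.

Lemma sorted_excise_cycle a c d :
  sorted linked (a ++ c ++ d) -> is_cycle c -> sorted linked (a ++ d).
Proof.
case: c => [|x c] // sorted_acd; rewrite is_cycleE => /andP[_ closed_c].
case: a sorted_acd => [|y a]; first by do 2!move/cat_sorted2 => [_].
case: d => [|z d]; first by rewrite !cats0 => /cat_sorted2[].
rewrite /= !cat_path /= !cat_path /= => /and5P[-> /eqP a_x _ /eqP c_z ->].
by move: closed_c => /eqP c_x; rewrite /= andbT /linked a_x -c_x c_z eqxx.
Qed.

Lemma sorted_simple_cycle_infix p : sorted linked p -> ~~ uniq p ->
  exists a c d, [/\ p = a ++ c ++ d, uniq c & is_cycle c].
Proof.
elim: {p}_.+1 {-2}p (ltnSn (size p)) => // n IHn p lt_p_n sorted_p nuniq_p.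
have [a [e [b [d p_eq]]]] := not_uniq_split nuniq_p.
have cycle_eb : is_cycle (e :: b).
  rewrite is_cycleE; move: sorted_p; rewrite p_eq => /cat_sorted2[_].
  by rewrite /= cat_path /= => /and3P[-> -> _].
have [uniq_eb | nuniq_eb] := boolP (uniq (e :: b)).
  by exists a, (e :: b), (e :: d); split; rewrite ?p_eq.
have lt_eb_n : size (e :: b) < n.
  by move: lt_p_n; rewrite p_eq size_cat /= size_cat /=; lia.
have [a' [c [d' [eb_eq uniq_c cycle_c]]]] :=
  IHn _ lt_eb_n (cycle_sorted cycle_eb) nuniq_eb.
by exists (a ++ a'), c, (d' ++ e :: d); rewrite p_eq -cat_cons eb_eq -!catA.
Qed.

Lemma occ_excise_simple a c d z :
  uniq c -> occ (a ++ c ++ d) z = occ (a ++ d) z + (z \in c).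
Proof.
by move=> uniq_c; rewrite /occ !count_cat (count_uniq_mem _ uniq_c) addnA addnAC.
Qed.

Lemma occ_sub_le_size p S : occ_sub p S <= size p.
Proof.
by rewrite /occ_sub; elim/big_rec: _ => // z m _ le_m; rewrite geq_min le_m orbT.
Qed.

Lemma occ_sub_le_occ p S z : z \in S -> occ_sub p S <= occ p z.
Proof.
move=> zS; rewrite /occ_sub; elim: (index_enum _) (mem_index_enum z) => //= y r IHr.
rewrite inE big_cons => /orP[/eqP <- | /IHr le_r]; first by rewrite zS geq_minl.
by case: (y \in S) => //; rewrite geq_min le_r orbT.
Qed.

Lemma occ_sub_ge p S m :
  m <= size p -> (forall z, z \in S -> m <= occ p z) -> m <= occ_sub p S.
Proof.
move=> le_m_p le_m_occ; rewrite /occ_sub.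
by elim/big_rec: _ => // z k zS le_m_k; rewrite leq_min le_m_occ.
Qed.

(* [c != [::]] matters: [occ_sub] of the empty support is the path length. *)
Lemma occ_sub_excise a c d S : c != [::] -> uniq c ->
  occ_sub (a ++ d) S + (S == edge_support c) <= occ_sub (a ++ c ++ d) S.
Proof.
move=> c_n0 uniq_c; apply: occ_sub_ge => [|z zS].
  have := occ_sub_le_size (a ++ d) S; rewrite !size_cat.
  by case: (c) c_n0 => //= e b _; case: (S == _); lia.
rewrite occ_excise_simple //; apply: leq_add; first exact: occ_sub_le_occ.
by case: eqP zS => // ->; rewrite inE => ->.
Qed.

Lemma path_cycle_decomposition p : sorted linked p ->
  exists f : {set edge G} -> nat,
    [/\ forall S, 0 < f S -> exists gamma, is_cycle gamma /\ edge_support gamma = S,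
        forall S, f S <= occ_sub p S
      & forall z, occ p z <= (\sum_S f S).+1].
Proof.
elim: {p}_.+1 {-2}p (ltnSn (size p)) => // n IHn p lt_p_n sorted_p.
have [uniq_p | nuniq_p] := boolP (uniq p).
  exists (fun _ => 0); split=> // z.
  by rewrite big1 // /occ count_uniq_mem //; case: (z \in p).
have [a [c [d [p_eq uniq_c cycle_c]]]] := sorted_simple_cycle_infix sorted_p nuniq_p.
have c_n0 : c != [::] by case: (c) cycle_c.
have lt_ad_n : size (a ++ d) < n.
  by move: lt_p_n c_n0; rewrite p_eq !size_cat; case: (c) => //= *; lia.
have sorted_ad : sorted linked (a ++ d).
  by apply: sorted_excise_cycle cycle_c; rewrite -p_eq.
have [f [f_cycle f_occ_sub f_occ]] := IHn _ lt_ad_n sorted_ad.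
pose T := edge_support c.
exists (fun S => f S + (S == T)); split.
- move=> S; have [-> _ | _] := eqP; first by exists c.
  by rewrite addn0; apply: f_cycle.
- move=> S; rewrite p_eq; apply: leq_trans (occ_sub_excise _ _ _ c_n0 uniq_c).
  by rewrite leq_add2r.
- have sum_indicator_T : \sum_S (S == T : nat) = 1.
    by rewrite (bigD1 T) //= eqxx big1 // => S /negPf ->.
  move=> z; rewrite big_split /= sum_indicator_T.
  rewrite p_eq occ_excise_simple //; have := f_occ z; case: (z \in c) => /=; lia.
Qed.

Lemma occ_bounded_of_cycles (pi : nat -> seq (edge G)) :
  (forall k, is_path (pi k)) ->
  (forall gamma, is_cycle gamma ->
     exists B, forall k, occ_sub (pi k) (edge_support gamma) <= B) ->
  forall z, exists B, forall k, occ (pi k) z <= B.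
Proof.
move=> path_pi cycle_bounded z.
have support_bounded S : exists B, forall gamma, is_cycle gamma ->
    edge_support gamma = S -> forall k, occ_sub (pi k) S <= B.
  have [[gamma [cycle_gamma <-]] | no_cycle] :=
    classic (exists gamma, is_cycle gamma /\ edge_support gamma = S).
    have [B le_B] := cycle_bounded _ cycle_gamma.
    by exists B => gamma' _ _.
  by exists 0 => gamma cycle_gamma eq_S; case: no_cycle; exists gamma.
have [B le_B] := fin_all_exists support_bounded.
exists (\sum_S B S).+1 => k.
have sorted_pik : sorted linked (pi k) by rewrite -is_pathE.
have [f [f_cycle f_occ_sub f_occ]] := path_cycle_decomposition sorted_pik.
apply: leq_trans (f_occ z) _; rewrite ltnS; apply: leq_sum => S _.
have [-> // | /f_cycle[gamma [cycle_gamma eq_S]]] := posnP (f S).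
exact: leq_trans (f_occ_sub S) (le_B S gamma cycle_gamma eq_S k).
Qed.

End CycleDecomposition.

Theorem lemma3p7 (G : multigraph) (pi : nat -> seq (edge G)) :
  (forall k, is_path (pi k)) ->
  (exists z : edge G, unbounded (fun k => occ (pi k) z)) ->
  exists gamma : seq (edge G),
    is_cycle gamma /\ unbounded (fun k => occ_sub (pi k) (edge_support gamma)).
Proof.
move=> path_pi [z unbounded_z]; apply: NNPP => no_gamma; apply: unbounded_z.
apply: occ_bounded_of_cycles path_pi _ z => gamma cycle_gamma.
by apply: NNPP => unbounded_gamma; apply: no_gamma; exists gamma.
Qed.
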